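(* Let $I\subset(0,1)$ be an admissible mesh family for $\Omega$, and for $h\in I$ let $\Sigma_h$ be the set of $(d-1)$-dimensional closed faces (facets) of the convex polytope $\overline{\Omega_h}$. If $\Omega$ is strictly convex, then $$\lim_{I\ni h\to0}\ \sup_{\boldsymbol{K}\in\Sigma_h}\ \sup_{\boldsymbol{x},\boldsymbol{x}'\in\boldsymbol{K}}|\boldsymbol{x}-\boldsymbol{x}'|=0.$$
   Context: $\Omega\subset\mathbb{R}^d$ is a bounded open convex domain; it is strictly convex if $\lambda\boldsymbol{x}+(1-\lambda)\boldsymbol{x}'\in\Omega$ for all $\boldsymbol{x},\boldsymbol{x}'\in\overline\Omega$, $0<\lambda<1$. $\Omega_\delta=\{\boldsymbol{x}\in\Omega:\operatorname{dist}(\boldsymbol{x},\partial\Omega)>\delta\}$. A mesh of $\Omega$ with parameter $h>0$ is a finite set $\mathcal T_h$ of closed $d$-simplices contained in $\overline\Omega$ such that: (i) for $T\ne T'$ in $\mathcal T_h$, $T\cap T'$ is a common sub-simplex of both of dimension at most $d-1$; (ii) $h=\max_{T\in\mathcal T_h}\operatorname{diam}T$; (iii) $\Omega_h:=\operatorname{Int}(\bigcup_{T\in\mathcal T_h}T)$ is convex; (iv) every vertex of $\mathcal T_h$ lying on $\partial\Omega_h$ belongs to $\partial\Omega$. An admissible mesh family is a set $I\subset(0,1)$ having $0$ as its unique accumulation point, together with a mesh $\mathcal T_h$ of $\Omega$ with parameter $h$ for each $h\in I$, such that for every $\delta>0$ there is $h_\delta>0$ with $\overline{\Omega_\delta}\subset\Omega_h$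 whenever $h\in I$ and $h<h_\delta$. *)

From mathcomp Require Import all_boot.
From Stdlib Require Import Reals.
Set Implicit Arguments. Unset Strict Implicit. Unset Printing Implicit Defensive.
Open Scope R_scope.

Definition Vec (d : nat) := 'I_d -> R.

Definition vsum (k : nat) (f : 'I_k -> R) : R := \big[Rplus/R0]_(i < k) f i.
Definition dot (d : nat) (x y : Vec d) : R := vsum (fun i => x i * y i).
Definition enorm (d : nat) (x : Vec d) : R := sqrt (dot x x).
Definition edist (d : nat) (x y : Vec d) : R := enorm (fun i => x i - y i).

Definition lincomb (d k : nat) (mu : 'I_k -> R) (p : 'I_k -> Vec d) : Vec d :=
  fun i => \big[Rplus/R0]_(j < k) (mu j * p j i).

Definition closureR (d : nat) (A : Vec d -> Prop) (x : Vec d) : Prop :=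
  forall e, 0 < e -> exists y, A y /\ edist x y < e.
Definition set_interior (d : nat) (A : Vec d -> Prop) (x : Vec d) : Prop :=
  exists e, 0 < e /\ forall y, edist x y < e -> A y.
Definition set_boundary (d : nat) (A : Vec d -> Prop) (x : Vec d) : Prop :=
  closureR A x /\ ~ set_interior A x.
Definition set_open (d : nat) (A : Vec d -> Prop) : Prop :=
  forall x, A x -> set_interior A x.
Definition set_bounded (d : nat) (A : Vec d -> Prop) : Prop :=
  exists M, forall x, A x -> enorm x <= M.
Definition set_convex (d : nat) (A : Vec d -> Prop) : Prop :=
  forall x y l, A x -> A y -> 0 <= l <= 1 ->
    A (fun i => l * x i + (1 - l) * y i).
Definition strictly_convex (d : nat) (A : Vec d -> Prop) : Prop :=
  forall x x' l, closureR A x -> closureR A x' -> x <> x' -> 0 < l < 1 ->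
    A (fun i => l * x i + (1 - l) * x' i).

(* Omega_delta = { x in Omega : edist(x, boundary Omega) > delta },
   edist(x, B) = inf_{y in B} |x - y|, so "> delta" means some delta' > delta
   is a lower bound of the distances. *)
Definition Omega_delta (d : nat) (Om : Vec d -> Prop) (delta : R) (x : Vec d) : Prop :=
  Om x /\ exists delta', delta < delta' /\
    forall y, set_boundary Om y -> delta' <= edist x y.

Definition aff_indep (d k : nat) (p : 'I_k -> Vec d) : Prop :=
  forall mu : 'I_k -> R, vsum mu = 0 -> (forall i, lincomb mu p i = 0) ->
    forall j, mu j = 0.

Definition hull_sub (d k : nat) (v : 'I_k -> Vec d) (S : {set 'I_k}) (x : Vec d) : Prop :=
  exists lam : 'I_k -> R, (forall j, 0 <= lam j) /\ (forall j, j \notin S -> lam j = 0)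
    /\ vsum lam = 1 /\ x = lincomb lam v.

(* a d-simplex given by its d+1 vertices (required affinely independent) *)
Definition Simplex (d : nat) := 'I_d.+1 -> Vec d.
Definition simplex_set (d : nat) (T : Simplex d) (x : Vec d) : Prop :=
  hull_sub T setT x.

Definition mesh_union (d : nat) (M : seq (Simplex d)) (x : Vec d) : Prop :=
  exists T, List.In T M /\ simplex_set T x.
Definition Omega_h (d : nat) (M : seq (Simplex d)) : Vec d -> Prop :=
  set_interior (mesh_union M).

Definition is_mesh (d : nat) (Om : Vec d -> Prop) (h : R) (M : seq (Simplex d)) : Prop :=
  (forall T, List.In T M -> aff_indep T /\ forall x, simplex_set T x -> closureR Om x) /\
  (* (i) distinct simplices meet in a common sub-simplex of dim <= d-1 (possibly empty) *)
  (forall T T', List.In T M -> List.In T' M ->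
     ~ (forall x, simplex_set T x <-> simplex_set T' x) ->
     exists (S S' : {set 'I_d.+1}), leq #|S| d /\ leq #|S'| d /\
       (forall x, (simplex_set T x /\ simplex_set T' x) <-> hull_sub T S x) /\
       (forall x, hull_sub T S x <-> hull_sub T' S' x)) /\
  is_lub (fun r => exists T, List.In T M /\ exists x y,
            simplex_set T x /\ simplex_set T y /\ r = edist x y) h /\
  set_convex (Omega_h M) /\
  (forall T j, List.In T M -> set_boundary (Omega_h M) (T j) -> set_boundary Om (T j)).

Definition admissible_mesh_family (d : nat) (Om : Vec d -> Prop) (I : R -> Prop)
    (mesh : R -> seq (Simplex d)) : Prop :=
  (forall h, I h -> 0 < h < 1) /\
  (* 0 is an accumulation point of I *)
  (forall e, 0 < e -> exists h, I h /\ h <> 0 /\ Rabs h < e) /\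
  (* and the only one *)
  (forall a, a <> 0 -> exists e, 0 < e /\
      forall h, I h -> h <> a -> e <= Rabs (h - a)) /\
  (forall h, I h -> is_mesh Om h (mesh h)) /\
  (forall delta, 0 < delta -> exists hd, 0 < hd /\
     forall h, I h -> h < hd ->
       forall x, closureR (Omega_delta Om delta) x -> Omega_h (mesh h) x).

Definition facet (d : nat) (P K : Vec d -> Prop) : Prop :=
  exists (a : Vec d) (b : R), (exists i, a i <> 0) /\
    (forall y, P y -> dot a y <= b) /\
    (forall y, K y <-> (P y /\ dot a y = b)) /\
    exists p : 'I_d -> Vec d, aff_indep p /\ forall j, K (p j).

(* Strict convexity of Om, made uniform by compactness of the closure: for
   x, x' in the closure at distance at least eps, a box of some fixed radius
   r > 0 around the midpoint of [x, x'] lies in Om.  A facet K of the convex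
   polytope closure(Omega_h) lies in the closure of Om and contains the midpoint
   of any two of its points, but never meets the open set Omega_h.  Since
   Omega_(r/2) is contained in Omega_h for small h, two points of K at distance
   more than eps would put their midpoint in Omega_h. *)
From HB Require Import structures.
From mathcomp Require Import all_boot.
From Stdlib Require Import Reals Lra Psatz ClassicalEpsilon Classical.
From Coquelicot Require Import Compactness Rcomplements.
Set Implicit Arguments. Unset Strict Implicit.
Open Scope R_scope.

Lemma Rplus_assoc' : associative Rplus. Proof. by move=> *; lra. Qed.
Lemma Rplus_comm' : commutative Rplus. Proof. by move=> *; lra. Qed.
Lemma Rplus_0_l' : left_id R0 Rplus. Proof. by move=> *; lra. Qed.
HB.instance Definition _ :=
  Monoid.isComLaw.Build R R0 Rplus Rplus_assoc' Rplus_comm' Rplus_0_l'.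

Lemma vsum_ext k (f g : 'I_k -> R) : (forall i, f i = g i) -> vsum f = vsum g.
Proof. by move=> H; apply: eq_bigr => i _. Qed.

Lemma vsum_le k (f g : 'I_k -> R) : (forall i, f i <= g i) -> vsum f <= vsum g.
Proof. by rewrite /vsum => H; elim/big_ind2: _ => // *; lra. Qed.

Lemma vsum_ge0 k (f : 'I_k -> R) : (forall i, 0 <= f i) -> 0 <= vsum f.
Proof. by rewrite /vsum => H; elim/big_ind: _ => // *; lra. Qed.

Lemma vsum_term k (f : 'I_k -> R) j : (forall i, 0 <= f i) -> f j <= vsum f.
Proof.
move=> H; rewrite /vsum (bigD1 j) //=.
have rest_ge0 : 0 <= \big[Rplus/R0]_(i < k | i != j) f i.
  by elim/big_ind: _ => [|a b ? ?|i _]; [lra|lra|apply: H].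
by rewrite -{1}(Rplus_0_r (f j)); apply: Rplus_le_compat_l.
Qed.

Lemma vsum_const k c : vsum (fun _ : 'I_k => c) = INR k * c.
Proof.
rewrite /vsum; elim: k => [|k IH]; first by rewrite big_ord0 /=; lra.
by rewrite big_ord_recr IH S_INR /=; lra.
Qed.

Lemma vsumD k (f g : 'I_k -> R) : vsum (fun i => f i + g i) = vsum f + vsum g.
Proof. by rewrite /vsum big_split. Qed.

Lemma vsumZ k c (f : 'I_k -> R) : vsum (fun i => c * f i) = c * vsum f.
Proof.
elim: k f => [|k IH] f; first by rewrite /vsum !big_ord0 /=; lra.
by rewrite /vsum !big_ord_recr /= -/(vsum _) IH Rmult_plus_distr_l.
Qed.

Lemma dot_ge0 d (v : Vec d) : 0 <= dot v v.
Proof. by apply: vsum_ge0 => i; nra. Qed.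

Lemma dot_gt0 d (a : Vec d) : (exists i, a i <> 0) -> 0 < dot a a.
Proof.
case=> i Hi; have := @vsum_term _ (fun j => a j * a j) i (fun j => ltac:(nra)).
by rewrite /dot; nra.
Qed.

Lemma dot_lin d (a x y : Vec d) p q :
  dot a (fun i => p * x i + q * y i) = p * dot a x + q * dot a y.
Proof. by rewrite /dot -!vsumZ -vsumD; apply: vsum_ext => i; ring. Qed.

(** * Euclidean norm versus coordinates *)

(* [INR d + 1] rather than [sqrt (INR d)] keeps the constant positive when [d = 0]. *)
Definition coord_factor (d : nat) := INR d + 1.

Lemma coord_factor_gt0 d : 0 < coord_factor d.
Proof. by rewrite /coord_factor; have := pos_INR d; lra. Qed.

Lemma Rabs_coord_le_enorm d (v : Vec d) i : Rabs (v i) <= enorm v.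
Proof.
rewrite /enorm -sqrt_Rsqr_abs; apply: sqrt_le_1_alt.
by apply: (@vsum_term _ (fun j => v j * v j) i) => j; nra.
Qed.

Lemma Rabs_coord_le_edist d (x y : Vec d) i : Rabs (x i - y i) <= edist x y.
Proof. exact: (@Rabs_coord_le_enorm _ (fun i => x i - y i)). Qed.

Lemma enorm_lt_of_coords d (v : Vec d) s :
  0 < s -> (forall i, Rabs (v i) < s) -> enorm v < coord_factor d * s.
Proof.
move=> s0 H; have Hd := pos_INR d.
have Hdot : dot v v <= INR d * (s * s).
  rewrite -vsum_const; apply: vsum_le => i.
  rewrite -[v i * v i]/(Rsqr (v i)) Rsqr_abs /Rsqr.
  by have := H i; have := Rabs_pos (v i); nra.
apply: (Rle_lt_trans _ (sqrt (INR d * (s * s)))); first exact: sqrt_le_1_alt.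
rewrite -(sqrt_Rsqr (coord_factor d * s)); last by have := coord_factor_gt0 d; nra.
by apply: sqrt_lt_1_alt; rewrite /Rsqr /coord_factor; split; nra.
Qed.

Lemma edist_lt_of_coords d (x y : Vec d) s :
  0 < s -> (forall i, Rabs (x i - y i) < s) -> edist x y < coord_factor d * s.
Proof. exact: (@enorm_lt_of_coords _ (fun i => x i - y i)). Qed.

Lemma edist_xx d (x : Vec d) : edist x x = 0.
Proof.
rewrite /edist /enorm -sqrt_0; congr sqrt.
apply: Rle_antisym; last exact: dot_ge0.
by rewrite -(Rmult_0_r (INR d)) -vsum_const; apply: vsum_le => i; nra.
Qed.

Lemma Rabs_sub_trans a b c : Rabs (a - c) <= Rabs (a - b) + Rabs (b - c).
Proof. by have := Rabs_triang (a - b) (b - c); rewrite /Rminus Rplus_assoc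
  -(Rplus_assoc (- b)) Rplus_opp_l Rplus_0_l. Qed.

(** * Closure and interior through coordinate boxes *)

Lemma closureR_self d (A : Vec d -> Prop) x : A x -> closureR A x.
Proof. by move=> Ax e e0; exists x; rewrite edist_xx. Qed.

Lemma interior_self d (A : Vec d -> Prop) x : set_interior A x -> A x.
Proof. by case=> e [e0 He]; apply: He; rewrite edist_xx. Qed.

Lemma closureR_box d (A : Vec d -> Prop) x : closureR A x <->
  forall s, 0 < s -> exists w, A w /\ forall i, Rabs (x i - w i) < s.
Proof.
split=> H s s0.
  case: (H s s0) => w [Aw Hw]; exists w; split=> // i.
  by have := Rabs_coord_le_edist x w i; lra.
have K0 := coord_factor_gt0 d.
have s' : 0 < s / coord_factor d by apply: Rdiv_lt_0_compat.
case: (H _ s') => w [Aw Hw]; exists w; split=> //.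
have -> : s = coord_factor d * (s / coord_factor d) by field; lra.
exact: edist_lt_of_coords.
Qed.

Lemma interior_box d (A : Vec d -> Prop) m : set_interior A m ->
  exists r, 0 < r /\ forall z, (forall i, Rabs (z i - m i) < r) -> A z.
Proof.
case=> e [e0 He]; have K0 := coord_factor_gt0 d.
exists (e / coord_factor d); split; first exact: Rdiv_lt_0_compat.
move=> z Hz; apply: He.
have -> : e = coord_factor d * (e / coord_factor d) by field; lra.
by apply: edist_lt_of_coords; [apply: Rdiv_lt_0_compat | move=> i; rewrite Rabs_minus_sym].
Qed.

Lemma interior_box_interior d (A : Vec d -> Prop) m : set_interior A m ->
  exists r, 0 < r /\ forall y, (forall i, Rabs (y i - m i) < r) -> set_interior A y.
Proof.
move/interior_box=> [r [r0 Hr]]; exists (r / 2); split; first lra.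
move=> y Hy; exists (r / 2); split=> [|z Hz]; first lra.
apply: Hr => i; have := Rabs_coord_le_edist y z i; have := Hy i.
by have := Rabs_sub_trans (z i) (y i) (m i); rewrite (Rabs_minus_sym (y i) (z i)); lra.
Qed.

Lemma not_closureR_box d (A : Vec d -> Prop) x : ~ closureR A x ->
  exists r, 0 < r /\ forall y, (forall i, Rabs (y i - x i) < r) -> ~ closureR A y.
Proof.
move=> Nx; have Nbox :
  ~ forall s, 0 < s -> exists w, A w /\ forall i, Rabs (x i - w i) < s.
  by move=> /closureR_box.
case/not_all_ex_not: Nbox => s Hs; case: (imply_to_and _ _ Hs) => s0 {}Hs.
exists (s / 2); split; first lra.
move=> y Hy /closureR_box Cy.
have [w [Aw Hw]] : exists w, A w /\ forall i, Rabs (y i - w i) < s / 2 by apply: Cy; lra.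
apply: Hs; exists w; split=> // i; have := Hy i; have := Hw i.
by have := Rabs_sub_trans (x i) (y i) (w i); rewrite (Rabs_minus_sym (x i) (y i)); lra.
Qed.

Definition mid d (x x' : Vec d) : Vec d := fun i => /2 * x i + (1 - /2) * x' i.

Lemma mid_close d (x x' y y' : Vec d) i r :
  Rabs (x i - y i) < r -> Rabs (x' i - y' i) < r -> Rabs (mid x x' i - mid y y' i) < r.
Proof.
move=> H1 H2; rewrite /mid.
have -> : /2 * x i + (1 - /2) * x' i - (/2 * y i + (1 - /2) * y' i)
   = /2 * (x i - y i) + /2 * (x' i - y' i) by field.
have := Rabs_triang (/2 * (x i - y i)) (/2 * (x' i - y' i)).
by rewrite !Rabs_mult (Rabs_right (/2)); lra.
Qed.

Lemma closureR_mid d (A : Vec d -> Prop) x x' : set_convex A ->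
  closureR A x -> closureR A x' -> closureR A (mid x x').
Proof.
move=> Ac /closureR_box Hx /closureR_box Hx'; apply/closureR_box => s s0.
case: (Hx s s0) => w [Aw Hw]; case: (Hx' s s0) => w' [Aw' Hw'].
by exists (mid w w'); split=> [|i]; [apply: Ac => //; lra | exact: mid_close].
Qed.

Lemma closureR_Omega_h_sub d (Om : Vec d -> Prop) h M y : is_mesh Om h M ->
  closureR (Omega_h M) y -> closureR Om y.
Proof.
move=> [HM _] /closureR_box Hy; apply/closureR_box => s s0.
case: (Hy (s / 2)) => [|w [/interior_self [T [HT HTw]] Hyw]]; first lra.
have /closureR_box Cw := proj2 (HM T HT) w HTw.
case: (Cw (s / 2)) => [|u [Ou Hwu]]; first lra.
exists u; split=> // i; have := Hyw i; have := Hwu i.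
by have := Rabs_sub_trans (y i) (w i) (u i); lra.
Qed.

(* The radius [r / 2] rather than [r] gives the strict inequality required by
   [Omega_delta]. *)
Lemma box_sub_Omega_delta d (Om : Vec d -> Prop) m r : set_open Om -> 0 < r ->
  (forall z, (forall i, Rabs (z i - m i) < r) -> Om z) -> Omega_delta Om (r / 2) m.
Proof.
move=> Oo r0 Hbox; split; first by apply: Hbox => i; rewrite Rminus_diag Rabs_R0.
exists r; split=> [|y [_ Ny]]; first lra.
apply: Rnot_lt_le => Hlt; apply: Ny; apply: Oo; apply: Hbox => i.
by have := Rabs_coord_le_edist m y i; rewrite Rabs_minus_sym; lra.
Qed.

(** * Facets *)

Lemma facet_sub d (P K : Vec d -> Prop) y : facet P K -> K y -> P y.
Proof. by case=> a [b [_ [_ [HK _]]]] /HK []. Qed.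

(* Push a point of [K] along the outer normal [a]: if it were interior, the
   pushed point would still satisfy [dot a y <= b]. *)
Lemma facet_not_interior d (A : Vec d -> Prop) K m :
  facet (closureR (set_interior A)) K -> K m -> ~ set_interior A m.
Proof.
case=> a [b [Ha [Hle [HK _]]]] Km Im.
case: (interior_box_interior Im) => r [r0 Hr].
have na : 0 <= enorm a by exact: sqrt_pos.
set t := r / (2 * (enorm a + 1)).
have t0 : 0 < t by apply: Rdiv_lt_0_compat; lra.
have Hy : closureR (set_interior A) (fun i => 1 * m i + t * a i).
  apply: closureR_self; apply: Hr => i.
  rewrite (_ : _ - _ = t * a i); last by ring.
  rewrite Rabs_mult Rabs_right; last lra.
  have := Rabs_coord_le_enorm a i => Hai.
  have E : t * (enorm a + 1) = r / 2 by rewrite /t; field; lra.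
  by nra.
have := Hle _ Hy; rewrite dot_lin; have [_ ->] := proj1 (HK m) Km.
by have := dot_gt0 Ha; nra.
Qed.

Lemma facet_mid d (P K : Vec d -> Prop) x x' : set_convex P -> facet (closureR P) K ->
  K x -> K x' -> K (mid x x').
Proof.
move=> Pc [a [b [_ [_ [HK _]]]]] /HK [Px Dx] /HK [Px' Dx'].
by apply/HK; split; [exact: closureR_mid | rewrite /mid dot_lin Dx Dx'; ring].
Qed.

(** * Uniform strict convexity *)

Definition sqdist d (x x' : Vec d) := dot (fun i => x i - x' i) (fun i => x i - x' i).

Lemma edist_sqr d (x x' : Vec d) : edist x x' * edist x x' = sqdist x x'.
Proof. by rewrite /edist /enorm sqrt_sqrt //; exact: dot_ge0. Qed.

Lemma sqdist_perturb d (x x' y y' : Vec d) r :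
  (forall i, Rabs (y i - x i) < r) -> (forall i, Rabs (y' i - x' i) < r) ->
  sqdist y y' <= 2 * sqdist x x' + INR d * (8 * (r * r)).
Proof.
move=> Hy Hy'.
rewrite /sqdist /dot -vsum_const -vsumZ -vsumD; apply: vsum_le => i.
have Hw : Rabs ((y i - x i) - (y' i - x' i)) < 2 * r.
  have := Rabs_sub_trans (y i - x i) 0 (y' i - x' i).
  by rewrite Rminus_0_r Rminus_0_l Rabs_Ropp; have := Hy i; have := Hy' i; lra.
move: Hw; rewrite (_ : y i - y' i = (x i - x' i) + ((y i - x i) - (y' i - x' i))); last by ring.
move: ((y i - x i) - (y' i - x' i)) (x i - x' i) => w p Hw.
have : w * w <= 4 * (r * r).
  by rewrite -[w * w]/(Rsqr w) Rsqr_abs /Rsqr; have := Rabs_pos w; nra.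
by have := Rle_0_sqr (p - w); rewrite /Rsqr; nra.
Qed.

(* The admissible radii [r] form a gauge on pairs [(x, x')], made uniform by
   Coquelicot's [compactness_value]. *)
Definition midpoint_gauge d (Om : Vec d -> Prop) eps r (x x' : Vec d) : Prop :=
  forall y y', (forall i, Rabs (y i - x i) < r) -> (forall i, Rabs (y' i - x' i) < r) ->
  closureR Om y -> closureR Om y' -> eps * eps <= sqdist y y' ->
  forall z, (forall i, Rabs (z i - mid y y' i) < r) -> Om z.

Lemma midpoint_gauge_exists d (Om : Vec d -> Prop) eps : set_open Om ->
  strictly_convex Om -> 0 < eps -> forall x x', exists r, 0 < r /\ midpoint_gauge Om eps r x x'.
Proof.
(* Near a pair outside the closure, or of length below [eps / 2], the condition
   is vacuous; otherwise strict convexity puts the midpoint of [x, x'] in [Om]. *)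
move=> Oo Osc e0 x x'.
case: (classic (closureR Om x)) => [Cx|/not_closureR_box [r [r0 Hr]]]; last first.
  by exists r; split=> // y y' Hy _ /(Hr y Hy).
case: (classic (closureR Om x')) => [Cx'|/not_closureR_box [r [r0 Hr]]]; last first.
  by exists r; split=> // y y' _ Hy' _ /(Hr y' Hy').
case: (Rlt_le_dec (sqdist x x') (eps * eps / 4)) => Hxx'.
  have K0 := coord_factor_gt0 d.
  pose s := eps / (4 * coord_factor d).
  have s0 : 0 < s by apply: Rdiv_lt_0_compat; lra.
  have Es : eps = 4 * coord_factor d * s by rewrite /s; field; lra.
  have Hds : INR d * (s * s) <= coord_factor d * coord_factor d * (s * s).
    by apply: Rmult_le_compat_r; [nra | rewrite /coord_factor; have := pos_INR d; nra].
  exists s; split=> // y y' Hy Hy' _ _ Hyy'; exfalso.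
  by have := sqdist_perturb Hy Hy'; rewrite Es in Hxx' Hyy'; nra.
have Hneq : x <> x' by move=> E; move: Hxx'; rewrite E -edist_sqr edist_xx; nra.
have Om_m : Om (mid x x') by apply: Osc => //; lra.
case: (interior_box (Oo _ Om_m)) => rho [rho0 Hrho].
exists (rho / 2); split=> [|y y' Hy Hy' _ _ _ z Hz]; first lra.
apply: Hrho => i; have := Hz i.
have := @mid_close d y y' x x' i (rho / 2) (Hy i) (Hy' i).
by have := Rabs_sub_trans (z i) (mid y y' i) (mid x x' i); lra.
Qed.

Fixpoint tn_of (n : nat) (f : nat -> R) : Tn n R :=
  match n return Tn n R with 0 => tt | n'.+1 => (f O, tn_of n' (fun k => f k.+1)) end.

Fixpoint tn_nth (n : nat) : Tn n R -> nat -> R :=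
  match n return Tn n R -> nat -> R with
  | 0 => fun _ _ => 0
  | n'.+1 => fun t k => if k is k'.+1 then tn_nth t.2 k' else t.1
  end.

Lemma tn_nth_of n f k : (k < n)%nat -> tn_nth (tn_of n f) k = f k.
Proof. by elim: n f k => [|n IH] f [|k] //= Hk; rewrite IH. Qed.

Lemma close_n_of n r f t : close_n n r (tn_of n f) t ->
  forall k, (k < n)%nat -> Rabs (f k - tn_nth t k) < r.
Proof.
elim: n f t => [//|n IH] f [t1 t2] /= [H1 H2] [|k] Hk //.
exact: (IH (fun k => f k.+1)).
Qed.

Lemma bounded_n_of n a b f : (forall k, (k < n)%nat -> a <= f k <= b) ->
  bounded_n n (tn_of n (fun _ => a)) (tn_of n (fun _ => b)) (tn_of n f).
Proof.
elim: n f => [//|n IH] f H /=; split; first exact: H.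
by apply: IH => k; apply: (H k.+1).
Qed.

(* A pair of points of [R^d] as a point of [Tn (d + d) R], the domain of
   Coquelicot's compactness theorem; the value of [vext] outside [0, d) is junk. *)
Definition vext d (y : Vec d) (k : nat) : R :=
  if insub k is Some i then y i else 0.

Definition pair_fun d (x x' : Vec d) (k : nat) : R :=
  if (k < d)%nat then vext x k else vext x' (k - d)%nat.

Definition tn_fst d (t : Tn (d + d) R) : Vec d := fun i => tn_nth t i.
Definition tn_snd d (t : Tn (d + d) R) : Vec d := fun i => tn_nth t (d + i).

Lemma pair_fun_fst d (x x' : Vec d) (i : 'I_d) : pair_fun x x' i = x i.
Proof. by rewrite /pair_fun ltn_ord /vext valK. Qed.

Lemma pair_fun_snd d (x x' : Vec d) (i : 'I_d) : pair_fun x x' (d + i) = x' i.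
Proof. by rewrite /pair_fun ltnNge leq_addr /= addKn /vext valK. Qed.

Lemma pair_fun_bound d (x x' : Vec d) C k : 0 <= C ->
  (forall i, Rabs (x i) <= C) -> (forall i, Rabs (x' i) <= C) -> - C <= pair_fun x x' k <= C.
Proof.
move=> C0 Hx Hx'; apply/Rabs_le_between; rewrite /pair_fun /vext.
by case: ifP => _; case: insubP => [i _ _|_] //; rewrite Rabs_R0.
Qed.

Lemma closureR_coord_bound d (Om : Vec d -> Prop) M x :
  (forall z, Om z -> enorm z <= M) -> closureR Om x -> forall i, Rabs (x i) <= Rabs M + 1.
Proof.
move=> HM /closureR_box Cx i; case: (Cx 1 Rlt_0_1) => w [Ow Hw].
have := Rabs_sub_trans (x i) (w i) 0; rewrite !Rminus_0_r.
by have := Rabs_coord_le_enorm w i; have := HM w Ow; have := Hw i; have := Rle_abs M; lra.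
Qed.

Lemma strictly_convex_uniform d (Om : Vec d -> Prop) eps :
  set_open Om -> set_bounded Om -> strictly_convex Om -> 0 < eps ->
  exists r, 0 < r /\ forall x x', closureR Om x -> closureR Om x' ->
    eps * eps <= sqdist x x' -> forall z, (forall i, Rabs (z i - mid x x' i) < r) -> Om z.
Proof.
move=> Oo [M HM] Osc e0.
set C := Rabs M + 1; have C0 : 0 <= C by rewrite /C; have := Rabs_pos M; lra.
have gauge t : {r : posreal | midpoint_gauge Om eps r (tn_fst t) (tn_snd t)}.
  apply: constructive_indefinite_description.
  case: (midpoint_gauge_exists Oo Osc e0 (tn_fst t) (tn_snd t)) => r [r0 Hr].
  by exists (mkposreal r r0).
case: (compactness_value (d + d) (tn_of _ (fun _ => - C)) (tn_of _ (fun _ => C))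
  (fun t => proj1_sig (gauge t))) => r Hr.
exists r; split=> [|x x' Cx Cx' Hxx' z Hz]; first exact: cond_pos.
have Hb := bounded_n_of (fun k (_ : (k < d + d)%nat) =>
  pair_fun_bound k C0 (closureR_coord_bound HM Cx) (closureR_coord_bound HM Cx')).
apply: NNPP => NOz; apply: (Hr _ Hb) => [[t [_ [Hc Hrt]]]]; apply: NOz.
have Hclose := close_n_of Hc.
apply: (proj2_sig (gauge t) x x') => // [i|i|i].
- have := Hclose i (leq_trans (ltn_ord i) (leq_addr d d)).
  by rewrite pair_fun_fst Rabs_minus_sym.
- have := Hclose (d + i)%nat; rewrite ltn_add2l ltn_ord pair_fun_snd Rabs_minus_sym.
  exact.
- by have := Hz i; lra.
Qed.

Theorem lemma6p1 (d : nat) (Om : Vec d -> Prop) (I : R -> Prop)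
    (mesh : R -> list (Simplex d)) :
  set_open Om -> set_bounded Om -> set_convex Om ->
  admissible_mesh_family Om I mesh ->
  strictly_convex Om ->
  forall eps, 0 < eps -> exists h0, 0 < h0 /\
    forall h, I h -> h < h0 ->
      forall K, facet (closureR (Omega_h (mesh h))) K ->
        forall x x', K x -> K x' -> edist x x' <= eps.
Proof.
move=> Oo Ob _ [_ [_ [_ [Hmesh Hdelta]]]] Osc eps e0.
case: (strictly_convex_uniform Oo Ob Osc e0) => r [r0 Hr].
case: (Hdelta (r / 2)) => [|h0 [h00 Hh0]]; first lra.
exists h0; split=> // h Ih hh0 K HK x x' Kx Kx'.
have Hm := Hmesh h Ih; have [_ [_ [_ [Oh_convex _]]]] := Hm.
have Cx := closureR_Omega_h_sub Hm (facet_sub HK Kx).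
have Cx' := closureR_Omega_h_sub Hm (facet_sub HK Kx').
apply: Rnot_lt_le => far.
have Hxx' : eps * eps <= sqdist x x' by rewrite -edist_sqr; nra.
apply: (facet_not_interior HK (facet_mid Oh_convex HK Kx Kx')).
apply: (Hh0 h Ih hh0); apply: closureR_self.
exact: box_sub_Omega_delta Oo r0 (Hr x x' Cx Cx' Hxx').
Qed.
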